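(* Let $(A,u_A)$ be an abstract state space and let $(B,u_B)$ be any fixed abstract state space whose ordered linear space $B$ is order-isomorphic to $A^*$. The following are equivalent: (a) $A$ is homogeneous; (b) every normalized state $\alpha$ in the interior of $A_+$ is the $A$-marginal of an isomorphism state in $B\otimes_{\max}A$, i.e., there is a state $\omega\in B\otimes_{\max}A$ such that $\hat\omega:B^*\to A$ is an order-isomorphism and $\hat\omega(u_B)=\alpha$.
   Context: An abstract state space is a pair $(A,u_A)$ where $A$ is a finite-dimensional real vector space with a closed, pointed, generating convex cone $A_+$, and $u_A$ is an interior point of the dual cone $A^*_+$; a normalized state is $\alpha\in A_+$ with $u_A(\alpha)=1$. An order-isomorphism is a linear bijection $\phi$ with $\phi(x)\ge0$ iff $x\ge0$. $A$ is homogeneous if the group of order-automorphisms of $A$ acts transitively on the interior of $A_+$. $B\otimes_{\max}A$ is the space of bilinear forms on $B^*\times A^*$ nonnegative on $B^*_+\times A^*_+$; a state is such a form with $\omega(u_B,u_A)=1$; $\hat\omega:B^*\to A$ is defined by $\hat\omega(b)(a)=\omega(b,a)$, and the $A$-marginal of $\omega$ is $\hat\omega(u_B)$. An isomorphism state is a state $\omega$ for which $\hat\omega$ is an order-isomorphism. *)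

From HB Require Import structures.
From mathcomp Require Import all_boot all_order all_algebra.
From mathcomp Require Import all_classical all_reals all_analysis.
Set Implicit Arguments. Unset Strict Implicit. Unset Printing Implicit Defensive.
Import Order.TTheory GRing.Theory Num.Theory.
Import numFieldNormedType.Exports.
Local Open Scope classical_set_scope.
Local Open Scope ring_scope.

(* A finite-dimensional real vector space of dimension n is modelled as
   'rV[R]_n (with its canonical normed topology).  Its dual is again 'rV[R]_n
   via the standard pairing  f(x) = \sum_i f_i x_i. *)

Definition pair (R : realType) (n : nat) (f x : 'rV[R]_n) : R :=
  \sum_(i < n) f ord0 i * x ord0 i.

Definition dual_cone (R : realType) (n : nat) (K : set 'rV[R]_n) : set 'rV[R]_n :=
  [set f | forall x, K x -> 0 <= pair f x].

Definition proper_cone (R : realType) (n : nat) (K : set 'rV[R]_n) : Prop :=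
  [/\ (K 0 /\ (forall x y, K x -> K y -> K (x + y))),
      (forall (t : R) x, 0 <= t -> K x -> K (t *: x)),
      closed K,
      (forall x, K x -> K (- x) -> x = 0)
    & (forall z, exists x y, K x /\ K y /\ z = x - y)].

(* abstract state space (A, u_A): A = 'rV_n ordered by the cone K,
   u in the interior of the dual cone *)
Definition abstract_state_space (R : realType) (n : nat)
    (K : set 'rV[R]_n) (u : 'rV[R]_n) : Prop :=
  proper_cone K /\ interior (dual_cone K) u.

Definition is_linear (R : realType) (U V : lmodType R) (f : U -> V) : Prop :=
  forall (a : R) x y, f (a *: x + y) = a *: f x + f y.

Definition order_iso (R : realType) (m n : nat) (K1 : set 'rV[R]_m)
    (K2 : set 'rV[R]_n) (f : 'rV[R]_m -> 'rV[R]_n) : Prop :=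
  [/\ is_linear f, bijective f & forall x, K2 (f x) <-> K1 x].

Definition homogeneous (R : realType) (n : nat) (K : set 'rV[R]_n) : Prop :=
  forall x y, interior K x -> interior K y ->
    exists g : 'rV[R]_n -> 'rV[R]_n, order_iso K K g /\ g x = y.

(* B (x)_max A : bilinear forms on B^* x A^*, nonnegative on B^*_+ x A^*_+ *)
Definition max_tensor (R : realType) (m n : nat) (KB : set 'rV[R]_m)
    (KA : set 'rV[R]_n) (w : 'rV[R]_m -> 'rV[R]_n -> R) : Prop :=
  [/\ (forall a, @is_linear R _ R^o (fun b => w b a)),
      (forall b, @is_linear R _ R^o (fun a => w b a))
    & (forall b a, dual_cone KB b -> dual_cone KA a -> 0 <= w b a)].

Definition max_state (R : realType) (m n : nat) (KB : set 'rV[R]_m) (uB : 'rV[R]_m)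
    (KA : set 'rV[R]_n) (uA : 'rV[R]_n) (w : 'rV[R]_m -> 'rV[R]_n -> R) : Prop :=
  max_tensor KB KA w /\ w uB uA = 1.

(* \hat w : B^* -> A,  \hat w(b)(a) = w(b,a); under A^** = A its coordinates
   are the values on the standard dual basis vectors. *)
Definition omega_hat (R : realType) (m n : nat) (w : 'rV[R]_m -> 'rV[R]_n -> R)
    (b : 'rV[R]_m) : 'rV[R]_n :=
  \row_(i < n) w b (delta_mx ord0 i).

From HB Require Import structures.
From mathcomp Require Import all_boot all_order all_algebra.
From mathcomp Require Import all_classical all_reals all_analysis.
From mathcomp Require Import ring lra.
Import Order.TTheory GRing.Theory Num.Theory.
Import numFieldNormedType.Exports.
Local Open Scope classical_set_scope.
Local Open Scope ring_scope.

(* (a) => (b): by the bipolar theorem (A_+)^** = A_+, proved with nearest points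
   in the closed cone A_+, the adjoint of the order-isomorphism B -> A^* is an
   order-isomorphism A -> B^*.  As the adjoint is continuous, its inverse
   psi : B^* -> A sends the interior point u_B into the interior of A_+; if g is an
   automorphism of A with g (psi u_B) = alpha, then w(b, a) = a (g (psi b)) is an
   isomorphism state with marginal alpha.
   (b) => (a): after rescaling nonzero interior points x, y to normalized states,
   isomorphism states give order-isomorphisms F_x, F_y : B^* -> A with
   F_x u_B = x and F_y u_B = y, and F_y o F_x^-1 maps x to y. *)

Set Implicit Arguments. Unset Strict Implicit. Unset Printing Implicit Defensive.

Section Pairing.
Variables (R : realType) (n : nat).
Implicit Types f x y : 'rV[R]_n.

Lemma pairC f x : pair f x = pair x f.
Proof. by apply: eq_bigr => i _; rewrite mulrC. Qed.

Lemma pairDr f x y : pair f (x + y) = pair f x + pair f y.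
Proof. by rewrite /pair -big_split; apply: eq_bigr => i _; rewrite mxE mulrDr. Qed.

Lemma pairZr a f x : pair f (a *: x) = a * pair f x.
Proof. by rewrite /pair mulr_sumr; apply: eq_bigr => i _; rewrite mxE mulrCA. Qed.

Lemma pairNr f x : pair f (- x) = - pair f x.
Proof. by rewrite -scaleN1r pairZr mulN1r. Qed.

Lemma pair0r f : pair f 0 = 0.
Proof. by rewrite -(scale0r 0) pairZr mul0r. Qed.

Lemma pairDl f g x : pair (f + g) x = pair f x + pair g x.
Proof. by rewrite !(pairC _ x) pairDr. Qed.

Lemma pairZl a f x : pair (a *: f) x = a * pair f x.
Proof. by rewrite !(pairC _ x) pairZr. Qed.

Lemma pairNl f x : pair (- f) x = - pair f x.
Proof. by rewrite !(pairC _ x) pairNr. Qed.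

Lemma pair_sumr I (r : seq I) (P : pred I) f (F : I -> 'rV[R]_n) :
  pair f (\sum_(i <- r | P i) F i) = \sum_(i <- r | P i) pair f (F i).
Proof. exact: (big_morph _ (pairDr f) (pair0r f)). Qed.

Lemma pair_delta f i : pair f (delta_mx ord0 i) = f ord0 i.
Proof.
rewrite /pair (bigD1 i) //= mxE !eqxx mulr1 big1 ?addr0 // => j /negbTE ji.
by rewrite mxE ji andbF mulr0.
Qed.

Lemma pair_injl f g : (forall x, pair f x = pair g x) -> f = g.
Proof. by move=> fg; apply/rowP => i; rewrite -!pair_delta fg. Qed.

Lemma pair_self_ge0 x : 0 <= pair x x.
Proof. by apply: sumr_ge0 => i _; rewrite -expr2 sqr_ge0. Qed.

Lemma pair_coord_sqr x i : x ord0 i ^+ 2 <= pair x x.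
Proof.
rewrite /pair (bigD1 i) //= -expr2 lerDl; apply: sumr_ge0 => j _.
by rewrite -expr2 sqr_ge0.
Qed.

Lemma pair_self_gt0 x : x != 0 -> 0 < pair x x.
Proof.
apply: contraNT; rewrite -leNgt => x_le0; apply/eqP/rowP => i; rewrite mxE.
by apply/eqP; rewrite -sqrf_eq0 eq_le sqr_ge0 andbT (le_trans (pair_coord_sqr x i)).
Qed.

Lemma pair_self_addZ x y s :
  pair (x + s *: y) (x + s *: y) = pair x x + 2 * s * pair x y + s ^+ 2 * pair y y.
Proof.
rewrite !pairDl !pairDr !pairZl !pairZr (pairC y x) mulr2n.
set a := pair x x; set b := pair x y; ring.
Qed.

Lemma pair_continuous y : continuous (fun x : 'rV[R]_n => pair x y).
Proof.
apply: continuous_big => [|i _]; first exact: add_continuous.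
by move=> x; apply: continuousM; [exact: coord_continuous | exact: cst_continuous].
Qed.

End Pairing.

Section Linear.
Variables (R : realType) (U V W : lmodType R).

Lemma is_linear0 (f : U -> V) : is_linear f -> f 0 = 0.
Proof.
by move=> lf; apply: (@addrI _ (f 0)); rewrite addr0 -{1}[f 0]scale1r -lf scaler0 addr0.
Qed.

Lemma is_linearD (f : U -> V) x y : is_linear f -> f (x + y) = f x + f y.
Proof. by move=> lf; have := lf 1 x y; rewrite !scale1r. Qed.

Lemma is_linearZ (f : U -> V) a x : is_linear f -> f (a *: x) = a *: f x.
Proof. by move=> lf; rewrite -[a *: x]addr0 lf is_linear0 // addr0. Qed.

Lemma is_linear_sum (f : U -> V) I (r : seq I) (P : pred I) (F : I -> U) :
  is_linear f -> f (\sum_(i <- r | P i) F i) = \sum_(i <- r | P i) f (F i).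
Proof.
by move=> lf; apply: (big_morph f) => [x y|]; [exact: is_linearD | exact: is_linear0].
Qed.

Lemma is_linear_comp (f : U -> V) (g : V -> W) :
  is_linear f -> is_linear g -> is_linear (g \o f).
Proof. by move=> lf lg a x y /=; rewrite lf lg. Qed.

Lemma is_linear_can (f : U -> V) g :
  is_linear f -> cancel f g -> cancel g f -> is_linear g.
Proof. by move=> lf fK gK a x y; rewrite -{1}(gK x) -{1}(gK y) -lf fK. Qed.

End Linear.

Section OrderIso.
Variables (R : realType) (p q r : nat).
Variables (K1 : set 'rV[R]_p) (K2 : set 'rV[R]_q) (K3 : set 'rV[R]_r).

Lemma order_iso_id : order_iso K1 K1 id.
Proof. by split=> //; exists id. Qed.

Lemma order_iso_comp f g :
  order_iso K1 K2 f -> order_iso K2 K3 g -> order_iso K1 K3 (g \o f).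
Proof.
move=> [lf bf Kf] [lg bg Kg]; split; [exact: is_linear_comp | exact: bij_comp |].
by move=> x; rewrite /= Kg Kf.
Qed.

Lemma order_iso_can f g :
  order_iso K1 K2 f -> cancel f g -> cancel g f -> order_iso K2 K1 g.
Proof.
move=> [lf _ Kf] fK gK; split; [exact: is_linear_can fK gK | by exists f |].
by move=> y; rewrite -Kf gK.
Qed.

Lemma order_iso_scale (c : R) : (forall t x, 0 <= t -> K1 x -> K1 (t *: x)) ->
  0 < c -> order_iso K1 K1 ( *:%R c).
Proof.
move=> KZ c0; have cK (x : 'rV[R]_p) : c^-1 *: (c *: x) = x.
  by rewrite scalerA mulVf ?gt_eqF ?scale1r.
split; first by move=> a x y; rewrite scalerDr !scalerA mulrC.
  by exists ( *:%R c^-1) => // x; rewrite /= scalerA mulfV ?gt_eqF ?scale1r.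
move=> x; split=> [|/(KZ _ _ (ltW c0)) //].
by rewrite -{2}(cK x); apply: KZ; rewrite invr_ge0 ltW.
Qed.

End OrderIso.

Section Adjoint.
Variable R : realType.

Definition adjoint p q (f : 'rV[R]_p -> 'rV[R]_q) (y : 'rV[R]_q) : 'rV[R]_p :=
  \row_i pair y (f (delta_mx ord0 i)).

Lemma adjointE p q (f : 'rV[R]_p -> 'rV[R]_q) y :
  adjoint f y = \sum_i pair y (f (delta_mx ord0 i)) *: delta_mx ord0 i.
Proof. by rewrite [LHS]row_sum_delta; apply: eq_bigr => i _; rewrite mxE. Qed.

Lemma pair_adjoint p q (f : 'rV[R]_p -> 'rV[R]_q) y x :
  is_linear f -> pair (adjoint f y) x = pair y (f x).
Proof.
move=> lf; rewrite [in RHS](row_sum_delta x) is_linear_sum // pair_sumr pairC.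
by apply: eq_bigr => i _; rewrite is_linearZ // pairZr mxE mulrC.
Qed.

Lemma adjoint_linear p q (f : 'rV[R]_p -> 'rV[R]_q) : is_linear (adjoint f).
Proof. by move=> a x y; apply/rowP => i; rewrite !mxE pairDl pairZl. Qed.

Lemma adjoint_continuous p q (f : 'rV[R]_p -> 'rV[R]_q) : continuous (adjoint f).
Proof.
rewrite (funext (adjointE f)); apply: continuous_big => [|i _].
  exact: add_continuous.
move=> y; have := @continuousZr_tmp R 'rV[R]_p 'rV[R]_q _ (delta_mx ord0 i) y.
by apply; exact: pair_continuous.
Qed.

Lemma adjoint_can p q (f : 'rV[R]_p -> 'rV[R]_q) g : is_linear f -> is_linear g ->
  cancel f g -> cancel (adjoint g) (adjoint f).
Proof. by move=> lf lg fK y; apply: pair_injl => x; rewrite !pair_adjoint ?fK. Qed.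

Lemma order_iso_adjoint p q (K1 : set 'rV[R]_p) (K2 : set 'rV[R]_q) f :
  order_iso K1 K2 f -> order_iso (dual_cone K2) (dual_cone K1) (adjoint f).
Proof.
move=> [lf [g fK gK] Kf]; have lg := is_linear_can lf fK gK.
split; [exact: adjoint_linear | by exists (adjoint g); exact: adjoint_can |].
move=> y; split=> [Dy z K2z | Dy x K1x]; last by rewrite pair_adjoint //; apply/Dy/Kf.
by rewrite -(gK z) -pair_adjoint //; apply/Dy/Kf; rewrite gK.
Qed.

End Adjoint.

Section NearestPoint.
Variables (R : realType) (n : nat).
Implicit Types z c d v : 'rV[R]_n.

Local Notation sqdist z v := (pair (z - v) (z - v)).

Lemma sqdist_continuous z : continuous (fun v => sqdist z v).
Proof.
apply: continuous_big => [|i _]; first exact: add_continuous.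
pose zv v := (z - v) ord0 i.
have zv_cont : continuous zv.
  rewrite (_ : zv = fun v => z ord0 i - v ord0 i); last first.
    by apply: funext => v; rewrite /zv !mxE.
  by move=> v; apply: (continuousB (f := fun=> z ord0 i) (g := fun v => v ord0 i));
    [exact: cst_continuous | exact: coord_continuous].
by move=> v; exact: (continuousM (zv_cont v) (zv_cont v)).
Qed.

Lemma sqdist_sublevel_bounded z (e : R) : bounded_set [set v | sqdist z v <= e].
Proof.
exists (`|z| + (`|e| + 1)); split; first exact: num_real.
move=> M /ltW zM v ve; apply: le_trans zM; rewrite [leLHS]/Num.norm /= mx_normrE.
apply/bigmax_leP; split=> [|[a i] _ /=]; first by rewrite !addr_ge0.
have -> : v a i = z ord0 i - (z - v) ord0 i.
  by rewrite (ord1 a) !mxE opprB addrC subrK.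
apply: le_trans (ler_normB _ _) _; apply: lerD.
  by rewrite [leRHS]/Num.norm /= mx_normrE; apply/bigmax_geP; right; exists (ord0, i).
have w2 : `|(z - v) ord0 i| ^+ 2 <= `|e|.
  rewrite real_normK ?num_real //.
  exact: le_trans (pair_coord_sqr _ i) (le_trans ve (ler_norm e)).
by have := normr_ge0 ((z - v) ord0 i); nra.
Qed.

Lemma nearest_point_exists (K : set 'rV[R]_n) z v0 : closed K -> K v0 ->
  exists2 c, K c & forall v, K v -> sqdist z c <= sqdist z v.
Proof.
move=> Kcl Kv0; pose A := K `&` [set v | sqdist z v <= sqdist z v0].
have Acl : closed A.
  apply: closedI Kcl (@preimage_closed _ _ (fun v => sqdist z v) [set e | e <= _] _ _).
    by move=> v _; exact: sqdist_continuous.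
  exact: closed_le.
have Abd : bounded_set A.
  by apply: sub_boundedr (sqdist_sublevel_bounded z _) => P SP v [_ /SP].
have [|c /set_mem[Kc cv0] cmin] := EVT_min_rV (f := fun v => sqdist z v)
  (ex_intro _ v0 (conj Kv0 (lexx _))) (bounded_closed_compact Abd Acl).
  exact: continuous_subspaceT (@sqdist_continuous z).
exists c => // v Kv; have [vv0|/ltW v0v] := lerP (sqdist z v) (sqdist z v0).
  by apply: cmin; apply/mem_set.
exact: le_trans v0v.
Qed.

Lemma nearest_point_dir z c d :
  (forall t, 0 < t <= 1 -> sqdist z c <= sqdist z (c + t *: d)) -> pair (z - c) d <= 0.
Proof.
move=> cmin; rewrite leNgt; apply/negP => p0.
(* [t] lies in (0, 1] and satisfies [t * dd < p], so the linear term [- 2 t p]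
   of the expansion below outweighs the quadratic one. *)
pose p := pair (z - c) d; pose dd := pair d d; pose t := p / (dd + p).
have dd0 : 0 <= dd := pair_self_ge0 d.
have t0 : 0 < t by rewrite divr_gt0 // ltr_wpDl.
have tE : t * (dd + p) = p by rewrite mulfVK // gt_eqF // ltr_wpDl.
have t1 : t <= 1 by rewrite ler_pdivrMr ?ltr_wpDl // mul1r lerDr.
have := cmin t; rewrite t0 t1 => /(_ isT).
have -> : z - (c + t *: d) = (z - c) + (- t) *: d by rewrite scaleNr opprD addrA.
rewrite pair_self_addZ -/p -/dd.
have ttE : t * (t * (dd + p)) = t * p by rewrite tE.
have tp : 0 < t * p := mulr_gt0 t0 p0.
have ttp : 0 < t * (t * p) := mulr_gt0 t0 tp.
nra.
Qed.

Section ClosedConvexCone.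
Variable K : set 'rV[R]_n.
Hypotheses (K0 : K 0) (KD : forall x y, K x -> K y -> K (x + y))
  (KZ : forall (t : R) x, 0 <= t -> K x -> K (t *: x)) (Kcl : closed K).

Lemma dual_dual_cone : dual_cone (dual_cone K) = K.
Proof.
apply/seteqP; split=> [z zKK | x Kx f Kf]; last by rewrite pairC; exact: Kf.
have [c Kc cmin] := nearest_point_exists z Kcl K0.
have cz_dual : dual_cone K (c - z).
  move=> k Kk; rewrite -opprB pairNl oppr_ge0; apply: nearest_point_dir.
  by move=> t /andP[t0 _]; apply/cmin/KD/KZ => //; exact: ltW.
have zc_c : 0 <= pair (z - c) c.
  rewrite -oppr_le0 -pairNr; apply: nearest_point_dir => t /andP[_ t1].
  have -> : c + t *: - c = (1 - t) *: c by rewrite scalerBl scale1r scalerN.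
  by apply/cmin/KZ; rewrite ?subr_ge0.
have sq : pair (z - c) (z - c) = - pair (c - z) z - pair (z - c) c.
  by rewrite pairDr pairNr -[c - z]opprB pairNl opprK.
have : z - c == 0.
  apply: contraTT (zKK _ cz_dual) => /pair_self_gt0.
  by rewrite sq -ltNge pairC; lra.
by rewrite subr_eq0 => /eqP ->.
Qed.

End ClosedConvexCone.
End NearestPoint.

Section Interior.
Variable R : realType.

Lemma exists_small_scale (V : normedModType R) (x : V) (e : R) :
  0 < e -> exists2 d : R, 0 < d & `|d *: x| < e.
Proof.
move=> e0; have x1 : 0 < `|x| + 1 by rewrite ltr_wpDl.
exists (e / (`|x| + 1)); first by rewrite divr_gt0.
rewrite normrZ gtr0_norm ?divr_gt0 // mulrAC ltr_pdivrMr // ltr_pM2l //.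
by rewrite ltrDl.
Qed.

Lemma order_iso_interior p q (K1 : set 'rV[R]_p) (K2 : set 'rV[R]_q) f x :
  order_iso K1 K2 f -> continuous f -> interior K2 (f x) -> interior K1 x.
Proof.
move=> [_ _ Kf] fcont K2fx; apply: (@filterS _ (nbhs x) _ (f @^-1` K2)) => [y /Kf //|].
exact: fcont.
Qed.

Variables (n : nat) (K : set 'rV[R]_n).

Lemma interior_coneZ (c : R) x : (forall (t : R) x, 0 <= t -> K x -> K (t *: x)) ->
  0 < c -> interior K x -> interior K (c *: x).
Proof.
move=> KZ c0 xi.
have ci0 : 0 < c^-1 by rewrite invr_gt0.
apply: (order_iso_interior (order_iso_scale KZ ci0)); first exact: scaler_continuous.
by rewrite scalerA mulVf ?gt_eqF // scale1r.
Qed.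

Lemma interior_cone0 : (forall (t : R) x, 0 <= t -> K x -> K (t *: x)) ->
  (forall x, K x -> K (- x) -> x = 0) -> interior K 0 -> forall z : 'rV[R]_n, z = 0.
Proof.
move=> KZ Kpt /nbhs_ballP[e e0 eK] z.
have inK v : `|v| < e -> K v by move=> ve; apply: eK; rewrite -ball_normE /= sub0r normrN.
have [d d0 dz] := exists_small_scale z e0.
have /eqP : d *: z = 0 by apply: Kpt; apply: inK; rewrite ?normrN.
by rewrite scaler_eq0 gt_eqF //= => /eqP.
Qed.

Lemma dual_interior_gt0 u x :
  interior (dual_cone K) u -> K x -> x != 0 -> 0 < pair u x.
Proof.
move=> /nbhs_ballP[e e0 eK] Kx x0; have [d d0 dx] := exists_small_scale x e0.
have : dual_cone K (u - d *: x).
  by apply: eK; rewrite -ball_normE /= opprB addrC subrK.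
move=> /(_ x Kx); rewrite pairDl pairNl pairZl subr_ge0.
by have := pair_self_gt0 x0; nra.
Qed.

End Interior.

Section StateSpaces.
Variables (R : realType) (n m : nat).
Variables (KA : set 'rV[R]_n) (uA : 'rV[R]_n) (KB : set 'rV[R]_m) (uB : 'rV[R]_m).

Lemma order_iso_predual phi : proper_cone KA ->
  order_iso KB (dual_cone KA) phi -> interior (dual_cone KB) uB ->
  exists2 psi, order_iso (dual_cone KB) KA psi & interior KA (psi uB).
Proof.
move=> [[KA0 KAD] KAZ KAcl _ _] phi_iso uBi.
have chi_iso := order_iso_adjoint phi_iso; rewrite dual_dual_cone // in chi_iso.
have [_ [psi chiK psiK] _] := chi_iso.
exists psi; first exact: order_iso_can chi_iso chiK psiK.
apply: (order_iso_interior chi_iso); first exact: adjoint_continuous.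
by rewrite psiK.
Qed.

Lemma omega_hat_pair (F : 'rV[R]_m -> 'rV[R]_n) : omega_hat (fun b a => pair (F b) a) = F.
Proof. by apply: funext => b; apply/rowP => i; rewrite mxE pair_delta. Qed.

Lemma max_state_order_iso F : order_iso (dual_cone KB) KA F -> pair uA (F uB) = 1 ->
  max_state KB uB KA uA (fun b a => pair (F b) a).
Proof.
move=> [lF _ KF] FuB; split; last by rewrite pairC.
split=> [a c b b' | b c a a' | b a Db Da] /=.
- by rewrite lF pairDl pairZl.
- by rewrite pairDr pairZr.
- by rewrite pairC; apply/Da/KF.
Qed.

End StateSpaces.

Section Homogeneity.
Variables (R : realType) (n m : nat) (K : set 'rV[R]_n) (u : 'rV[R]_n).
Variables (C : set 'rV[R]_m) (e : 'rV[R]_m).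
Hypotheses (KZ : forall (t : R) x, 0 <= t -> K x -> K (t *: x))
  (Kpt : forall x, K x -> K (- x) -> x = 0) (ui : interior (dual_cone K) u).
Hypothesis marginal_iso : forall alpha, interior K alpha -> pair u alpha = 1 ->
  exists2 F, order_iso C K F & F e = alpha.

Lemma order_iso_to_interior x : interior K x -> x != 0 ->
  exists2 F, order_iso C K F & F e = x.
Proof.
move=> xi x0.
have ux0 : 0 < pair u x := dual_interior_gt0 ui (nbhs_singleton xi) x0.
have [F F_iso Fe] : exists2 F, order_iso C K F & F e = (pair u x)^-1 *: x.
  apply: marginal_iso; first by apply: interior_coneZ; rewrite ?invr_gt0.
  by rewrite pairZr mulVf ?gt_eqF.
exists (( *:%R (pair u x)) \o F).
  exact: order_iso_comp F_iso (order_iso_scale KZ ux0).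
by rewrite /= Fe scalerA mulfV ?gt_eqF // scale1r.
Qed.

Lemma homogeneous_of_marginal_isos : homogeneous K.
Proof.
move=> x y xi yi.
have [K_trivial|[x0 y0]] : (forall z : 'rV[R]_n, z = 0) \/ (x != 0 /\ y != 0).
- have [x0|x0] := eqVneq x 0; first by left; apply: (interior_cone0 KZ Kpt); rewrite -x0.
  have [y0|y0] := eqVneq y 0; first by left; apply: (interior_cone0 KZ Kpt); rewrite -y0.
  by right.
- by exists id; rewrite (K_trivial x) (K_trivial y); split; first exact: order_iso_id.
have [Fx Fx_iso Fxe] := order_iso_to_interior xi x0.
have [Fy Fy_iso Fye] := order_iso_to_interior yi y0.
have [_ [Gx FxK GxK] _] := Fx_iso.
exists (Fy \o Gx); split.
  exact: order_iso_comp (order_iso_can Fx_iso FxK GxK) Fy_iso.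
by rewrite /= -Fxe FxK.
Qed.

End Homogeneity.

Unset Implicit Arguments.

Theorem theorem4p1 (R : realType) (n m : nat)
    (KA : set 'rV[R]_n) (uA : 'rV[R]_n)
    (KB : set 'rV[R]_m) (uB : 'rV[R]_m) :
  abstract_state_space KA uA ->
  abstract_state_space KB uB ->
  (exists phi : 'rV[R]_m -> 'rV[R]_n, order_iso KB (dual_cone KA) phi) ->
  (homogeneous KA <->
   (forall alpha : 'rV[R]_n, interior KA alpha -> pair uA alpha = 1 ->
      exists w : 'rV[R]_m -> 'rV[R]_n -> R,
        max_state KB uB KA uA w /\
        order_iso (dual_cone KB) KA (omega_hat w) /\
        omega_hat w uB = alpha)).
Proof.
move=> [KA_proper uAi] [_ uBi] [phi phi_iso].
have [psi psi_iso psi_uB] := order_iso_predual KA_proper phi_iso uBi.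
have [_ KAZ _ KApt _] := KA_proper.
split=> [hom alpha alpha_i alpha1 | iso_marginals].
- have [g [g_iso g_alpha]] := hom _ _ psi_uB alpha_i.
  have gpsi_iso := order_iso_comp psi_iso g_iso.
  exists (fun b a => pair ((g \o psi) b) a); rewrite omega_hat_pair.
  split; first by apply: max_state_order_iso; rewrite //= g_alpha.
  by split.
- apply: (homogeneous_of_marginal_isos (C := dual_cone KB) (e := uB) KAZ KApt uAi).
  move=> alpha alpha_i alpha1.
  by have [w [_ [w_iso w_alpha]]] := iso_marginals alpha alpha_i alpha1; exists (omega_hat w).
Qed.
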